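(* Let $V$ be a finite-dimensional vector space over $\mathbb{F}_2$ with nondegenerate quadratic form $Q$ and associated bilinear form $B$. Let $W$ be a subspace of $V$ of dimension $d\ge 2$ with $d\equiv 2\pmod 4$ such that $W$ has a symmetric basis (with respect to the restriction of $Q$). Suppose $\{a,b\},\{c,d'\},\{g,h\}$ are three hyperbolic pairs contained in $W^{\perp}\setminus W$ which are pairwise perpendicular (every vector of one pair is orthogonal under $B$ to every vector of each other pair). Let $W'=W\perp\langle a,b\rangle\perp\langle c,d'\rangle\perp\langle g,h\rangle$. Then $W'$ has a symmetric basis.
   Context: The associated bilinear form of $Q$ is $B(u,v)=Q(u+v)-Q(u)-Q(v)$. $W^\perp=\{v\in V: B(w,v)=0\ \forall w\in W\}$. A pair $\{u,v\}$ of distinct vectors is a hyperbolic pair if $Q(u)=Q(v)=0$ and $B(u,v)=1$. A basis $\{v_1,\dots,v_m\}$ of a subspace is symmetric if $Q(v_i)=0$ for all $i$ and $B(v_i,v_j)=1$ for all $i\ne j$. *)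

From HB Require Import structures.
From mathcomp Require Import all_boot all_order all_algebra.
Set Implicit Arguments. Unset Strict Implicit. Unset Printing Implicit Defensive.
Import GRing.Theory.
Local Open Scope ring_scope.

Definition assoc_bil {V : vectType 'F_2} (Q : V -> 'F_2) (u v : V) : 'F_2 :=
  Q (u + v) - Q u - Q v.

(* Q is a quadratic form: Q(k v) = k^2 Q(v) and B is bilinear
   (additive in the first argument; B is symmetric by definition and
   F_2-linearity follows from additivity). *)
Definition quadratic_form {V : vectType 'F_2} (Q : V -> 'F_2) : Prop :=
  (forall (k : 'F_2) (v : V), Q (k *: v) = k ^+ 2 * Q v) /\
  (forall u v w : V, assoc_bil Q (u + v) w = assoc_bil Q u w + assoc_bil Q v w).

Definition nondeg_qform {V : vectType 'F_2} (Q : V -> 'F_2) : Prop :=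
  forall v : V, (forall w : V, assoc_bil Q v w = 0) -> Q v = 0 -> v = 0.

Definition in_perp {V : vectType 'F_2} (Q : V -> 'F_2) (W : {vspace V}) (v : V) : Prop :=
  forall w : V, w \in W -> assoc_bil Q w v = 0.

Definition hyperbolic_pair {V : vectType 'F_2} (Q : V -> 'F_2) (u v : V) : Prop :=
  u != v /\ Q u = 0 /\ Q v = 0 /\ assoc_bil Q u v = 1.

Definition has_symmetric_basis {V : vectType 'F_2} (Q : V -> 'F_2) (W : {vspace V}) : Prop :=
  exists X : seq V, basis_of W X /\
    (forall i, (i < size X)%N -> Q X`_i = 0) /\
    (forall i j, (i < size X)%N -> (j < size X)%N -> i != j -> assoc_bil Q X`_i X`_j = 1).

Definition pairs_perp {V : vectType 'F_2} (Q : V -> 'F_2) (a b c d : V) : Prop :=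
  assoc_bil Q a c = 0 /\ assoc_bil Q a d = 0 /\ assoc_bil Q b c = 0 /\ assoc_bil Q b d = 0.

From HB Require Import structures.
From mathcomp Require Import all_boot all_order all_algebra.
From mathcomp Require Import ring zify.
Set Implicit Arguments. Unset Strict Implicit. Unset Printing Implicit Defensive.
Import GRing.Theory.
Local Open Scope ring_scope.

(* Let X be a symmetric basis of W and s the sum of its vectors.  As
   dim W = 2 mod 4, Q(s) = C(dim W, 2) = 1 and B(x, s) = dim W - 1 = 1 for x
   in X.  The hyperbolic space H = <a,b> + <c,d'> + <g,h> contains six
   vectors y with Q(y) = 1 and B(y, y') = 1 for y <> y', so the vectors s + y
   extend X to a system of dim W + 6 vectors of W + H with Q = 0 and pairwise
   B = 1.  Such a system of even size is linearly independent (its Gram matrix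
   J - I squares to the identity), hence a basis of W + H.  Neither the
   nondegeneracy of Q, nor d >= 2, nor a, ..., h \notin W is needed. *)

Lemma F2_cases (x : 'F_2) : x = 0 \/ x = 1.
Proof. by case: x => [[|[|//]] lt_x2]; [left | right]; apply/val_inj. Qed.

Lemma F2_nat m : m%:R = (odd m)%:R :> 'F_2.
Proof. by rewrite -modn2 Fp_nat_mod. Qed.

Lemma F2_addxx (x : 'F_2) : x + x = 0.
Proof. exact/addrr_pchar2/pchar_Fp. Qed.

Lemma odd_bin2_mod4 n : (n %% 4 = 2)%N -> odd 'C(n, 2).
Proof. by move=> n_mod4; rewrite bin2; lia. Qed.

Lemma odd_pred_mod4 n : (n %% 4 = 2)%N -> odd n.-1.
Proof. by move=> n_mod4; lia. Qed.

Lemma basis_of_addv_span (K : fieldType) (vT : vectType K) (U : {vspace vT})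
    (S Z : seq vT) :
  free Z -> {subset Z <= (U + <<S>>)%VS} -> size Z = (\dim U + size S)%N ->
  basis_of (U + <<S>>)%VS Z.
Proof.
move=> freeZ sZUS sizeZ; rewrite basisEfree freeZ /=; apply/andP; split.
  exact/span_subvP.
by rewrite sizeZ (leq_trans (dimv_add_leqif _ _)) // leq_add2l dim_span.
Qed.

Section QuadraticForm.
Variables (V : vectType 'F_2) (Q : V -> 'F_2).
Hypothesis qfQ : quadratic_form Q.
Local Notation B := (assoc_bil Q).

Lemma qformD u v : Q (u + v) = Q u + Q v + B u v.
Proof. by rewrite /assoc_bil; ring. Qed.

Lemma bilC u v : B u v = B v u.
Proof. by rewrite /assoc_bil [u + v]addrC; ring. Qed.

Lemma bilDl u v w : B (u + v) w = B u w + B v w.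
Proof. exact: qfQ.2. Qed.

Lemma bilDr u v w : B w (u + v) = B w u + B w v.
Proof. by rewrite bilC bilDl !(bilC w). Qed.

Lemma bil0l w : B 0 w = 0.
Proof. by apply/(addrI (B 0 w)); rewrite -bilDl !addr0. Qed.

Lemma bil0r w : B w 0 = 0.
Proof. by rewrite bilC bil0l. Qed.

Lemma qform0 : Q 0 = 0.
Proof. by rewrite -(scale0r 0) qfQ.1 expr2 !mul0r. Qed.

Lemma bilxx x : B x x = 0.
Proof.
have x2 : x + x = 0 by rewrite -[x]scale1r -scalerDl F2_addxx scale0r.
by rewrite /assoc_bil x2 qform0 sub0r -opprD F2_addxx oppr0.
Qed.

Lemma bilZl k u w : B (k *: u) w = k * B u w.
Proof.
by case: (F2_cases k) => ->; rewrite ?scale0r ?bil0l ?mul0r ?scale1r ?mul1r.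
Qed.

Lemma bilZr k u w : B w (k *: u) = k * B w u.
Proof. by rewrite bilC bilZl bilC. Qed.

Lemma bil_suml (I : Type) (r : seq I) (P : pred I) (F : I -> V) w :
  B (\sum_(i <- r | P i) F i) w = \sum_(i <- r | P i) B (F i) w.
Proof. exact: (big_morph (B^~ w) (fun u v => bilDl u v w) (bil0l w)). Qed.

Lemma bil_perp_span w (S : seq V) :
  {in S, forall x, B w x = 0} -> forall v, v \in <<S>>%VS -> B w v = 0.
Proof.
elim: S => [_ v | x S IH perpS v].
  by rewrite span_nil memv0 => /eqP->; apply: bil0r.
rewrite span_cons => /memv_addP[_ /vlineP[k ->] [u uS ->]].
rewrite bilDr bilZr perpS ?mem_head // IH ?mulr0 ?addr0 // => y yS.
by rewrite perpS // inE yS orbT.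
Qed.

Definition bil_one : rel V := fun x y => B x y == 1.

Definition symmetric_seq (X : seq V) :=
  all (fun x => Q x == 0) X && pairwise bil_one X.

Lemma pairwise_bil_oneP X :
  reflect (forall i j, (i < size X)%N -> (j < size X)%N -> i != j ->
             B X`_i X`_j = 1)
          (pairwise bil_one X).
Proof.
apply: (iffP (pairwiseP (0 : V))) => [BX i j ltiX ltjX | BX i j ltiX ltjX ltij].
  case: (ltngtP i j) => // [ltij | ltji] _; first exact/eqP/BX.
  by rewrite bilC; apply/eqP/BX.
by apply/eqP/BX => //; rewrite neq_ltn ltij.
Qed.

Lemma symmetric_seqP X :
  reflect ((forall i, (i < size X)%N -> Q X`_i = 0) /\
           (forall i j, (i < size X)%N -> (j < size X)%N -> i != j ->
              B X`_i X`_j = 1))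
          (symmetric_seq X).
Proof.
apply: (iffP andP) => [[/(all_nthP 0) QX /pairwise_bil_oneP BX] | [QX BX]].
  by split=> // i /QX/eqP.
by split; [apply/(all_nthP 0) => i /QX -> | apply/pairwise_bil_oneP].
Qed.

Lemma has_symmetric_basisP W :
  has_symmetric_basis Q W <-> exists2 X, basis_of W X & symmetric_seq X.
Proof.
split=> [[X [basisX symX]] | [X basisX /symmetric_seqP symX]]; last by exists X.
by exists X => //; apply/symmetric_seqP.
Qed.

Lemma bil_sum_one x Y : all (bil_one x) Y -> B x (\sum_(y <- Y) y) = (size Y)%:R.
Proof.
elim: Y => [|y Y IH] /=; first by rewrite big_nil bil0r.
by case/andP=> /eqP Bxy /IH BxY; rewrite big_cons bilDr Bxy BxY -mulrS.
Qed.

Lemma qform_sum_symmetric X :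
  symmetric_seq X -> Q (\sum_(x <- X) x) = 'C(size X, 2)%:R.
Proof.
elim: X => [|x X IH]; first by rewrite big_nil qform0.
rewrite /symmetric_seq /= => /andP[/andP[/eqP Qx QX] /andP[BxX BX]].
rewrite big_cons qformD Qx IH; last exact/andP.
by rewrite bil_sum_one // add0r binS bin1 natrD.
Qed.

Lemma bil_mem_sum_symmetric x X :
  pairwise bil_one X -> x \in X -> B x (\sum_(y <- X) y) = (size X).-1%:R.
Proof.
elim: X => [//|y X IH]; rewrite pairwise_cons inE big_cons bilDr => /andP[ByX BX].
case: (eqVneq x y) => [-> _ | _ /= xX]; first by rewrite bilxx add0r bil_sum_one.
have ltX : (0 < size X)%N by case: X xX {IH ByX BX}.
by rewrite IH // bilC (eqP (allP ByX x xX)) -mulrS prednK.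
Qed.

Lemma free_pairwise_bil_one X : ~~ odd (size X) -> pairwise bil_one X -> free X.
Proof.
move=> evenX /pairwise_bil_oneP BX; apply/(freeP (X := in_tuple X)) => k sum_kX0.
set n := size X in k sum_kX0 BX *.
(* Pairing the relation with X_j gives k_j = sum of all k_i; that sum is then
   n times itself, i.e. 0. *)
have kE j : k j = \sum_(i < n) k i.
  have := congr1 (B^~ X`_j) sum_kX0.
  rewrite /= bil0l bil_suml (bigD1 j) //= bilZl bilxx mulr0 add0r => sum0.
  suff sum_k0 : \sum_(i < n | i != j) k i = 0 by rewrite (bigD1 j) //= sum_k0 addr0.
  by rewrite -[RHS]sum0; apply: eq_bigr => i ij; rewrite bilZl BX ?mulr1.
have sum_k0 : \sum_(i < n) k i = 0.
  rewrite [LHS](eq_bigr (fun=> \sum_(i < n) k i)) => [|j _]; last exact: kE.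
  by rewrite sumr_const card_ord -mulr_natr F2_nat (negbTE evenX) mulr0.
by move=> i; rewrite kE sum_k0.
Qed.

Lemma symmetric_seq_extend X Y :
  (size X %% 4 = 2)%N -> symmetric_seq X ->
  all (fun y => Q y == 1) Y -> pairwise bil_one Y ->
  {in X & Y, forall x y, B x y = 0} ->
  symmetric_seq (X ++ [seq \sum_(x <- X) x + y | y <- Y]).
Proof.
move=> X_mod4 symX QY BY perpXY; set s := \sum_(x <- X) x.
have [QX BX] := andP symX.
have Qs : Q s = 1 by rewrite qform_sum_symmetric // F2_nat odd_bin2_mod4.
have Bxs x : x \in X -> B x s = 1.
  by move=> xX; rewrite bil_mem_sum_symmetric // F2_nat odd_pred_mod4.
have Bsy y : y \in Y -> B s y = 0.
  by move=> yY; rewrite bil_suml big_seq big1 // => x xX; exact: perpXY.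
rewrite /symmetric_seq all_cat pairwise_cat QX BX all_map pairwise_map allrel_mapr /=.
apply/and3P; split.
- apply/allP => y yY /=.
  by rewrite qformD Qs (eqP (allP QY y yY)) Bsy.
- by apply/allrelP => x y xX yY; rewrite /bil_one bilDr Bxs // perpXY // addr0.
- apply: (sub_in_pairwise (P := mem Y)) BY; last exact: allss.
  move=> y y' yY y'Y; rewrite /bil_one /relpre /=.
  by rewrite !bilDl !bilDr bilxx (bilC y s) !Bsy // !add0r.
Qed.

(* Along the planes <a,b>, <c,d>, <g,h> each vector has exactly one component
   a+b, c+d or g+h (the anisotropic vectors of a hyperbolic plane), and any
   two of them have distinct nonzero components in an odd number of planes. *)
Definition hyperbolic_sextet (a b c d g h : V) : seq V :=
  [:: g + h; c + d + h; b + c + d + g; a + c + d + g; a + b + g; a + b + d + h].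

Lemma hyperbolic_sextet_span a b c d g h :
  {subset hyperbolic_sextet a b c d g h <= <<[:: a; b; c; d; g; h]>>%VS}.
Proof.
have inS x : x \in [:: a; b; c; d; g; h] -> x \in <<[:: a; b; c; d; g; h]>>%VS.
  exact: memv_span.
apply/allP; rewrite /= andbT; repeat (apply/andP; split);
  by repeat apply: rpredD; apply: inS; rewrite !inE eqxx ?orbT.
Qed.

Lemma hyperbolic_sextet_gram a b c d g h :
  hyperbolic_pair Q a b -> hyperbolic_pair Q c d -> hyperbolic_pair Q g h ->
  pairs_perp Q a b c d -> pairs_perp Q a b g h -> pairs_perp Q c d g h ->
  all (fun y => Q y == 1) (hyperbolic_sextet a b c d g h) &&
  pairwise bil_one (hyperbolic_sextet a b c d g h).
Proof.
move=> [_ [Qa [Qb Bab]]] [_ [Qc [Qd Bcd]]] [_ [Qg [Qh Bgh]]].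
move=> [Bac [Bad [Bbc Bbd]]] [Bag [Bah [Bbg Bbh]]] [Bcg [Bch [Bdg Bdh]]].
rewrite /= /bil_one !qformD !bilDl !bilDr !bilxx.
rewrite ?(bilC b a) ?(bilC c a) ?(bilC d a) ?(bilC g a) ?(bilC h a).
rewrite ?(bilC c b) ?(bilC d b) ?(bilC g b) ?(bilC h b).
rewrite ?(bilC d c) ?(bilC g c) ?(bilC h c) ?(bilC g d) ?(bilC h d) ?(bilC h g).
by rewrite Qa Qb Qc Qd Qg Qh Bab Bcd Bgh Bac Bad Bbc Bbd Bag Bah Bbg Bbh
  Bcg Bch Bdg Bdh.
Qed.

End QuadraticForm.

Theorem lemma3p2 (V : vectType 'F_2) (Q : V -> 'F_2)
  (HQ : quadratic_form Q) (Hnd : nondeg_qform Q)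
  (W : {vspace V}) (d : nat)
  (HdimW : \dim W = d) (Hd2 : (2 <= d)%N) (Hdmod : (d %% 4 = 2)%N)
  (HW : has_symmetric_basis Q W)
  (a b c d' g h : V)
  (Hperp : forall x, x \in [:: a; b; c; d'; g; h] -> in_perp Q W x /\ x \notin W)
  (Hab : hyperbolic_pair Q a b) (Hcd : hyperbolic_pair Q c d')
  (Hgh : hyperbolic_pair Q g h)
  (Hp1 : pairs_perp Q a b c d') (Hp2 : pairs_perp Q a b g h)
  (Hp3 : pairs_perp Q c d' g h) :
  has_symmetric_basis Q (W + <[a]> + <[b]> + <[c]> + <[d']> + <[g]> + <[h]>)%VS.
Proof.
move/has_symmetric_basisP: HW => [X basisX symX].
set S := [:: a; b; c; d'; g; h]; set Y := hyperbolic_sextet a b c d' g h.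
have sizeX : size X = d by rewrite -HdimW; case/andP: basisX => /eqP <- /eqnP.
have XW x : x \in X -> x \in W by rewrite -(eqP (andP basisX).1); apply: memv_span.
have perpXY : {in X & Y, forall x y, assoc_bil Q x y = 0}.
  move=> x y /XW xW /hyperbolic_sextet_span yS.
  by apply: (bil_perp_span HQ) yS => z /Hperp[perpWz _]; apply: perpWz.
have [QY BY] := andP (hyperbolic_sextet_gram HQ Hab Hcd Hgh Hp1 Hp2 Hp3).
set Z := X ++ [seq \sum_(x <- X) x + y | y <- Y].
have symZ : symmetric_seq Q Z by apply: symmetric_seq_extend; rewrite ?sizeX.
apply/has_symmetric_basisP; exists Z => //.
have -> : (W + <[a]> + <[b]> + <[c]> + <[d']> + <[g]> + <[h]> = W + <<S>>)%VS.
  by rewrite !span_cons span_nil addv0 !addvA.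
apply: basis_of_addv_span.
- apply: (free_pairwise_bil_one HQ _ (andP symZ).2).
  by rewrite size_cat size_map sizeX /=; lia.
- move=> z; rewrite mem_cat => /orP[/XW zW | /mapP[y /hyperbolic_sextet_span yS ->]].
    exact: (subvP (addvSl _ _)).
  by apply: memv_add => //; rewrite big_seq; apply: rpred_sum => x /XW.
- by rewrite size_cat size_map sizeX HdimW.
Qed.
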